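(* Let $m,n\in\mathbb{Z}_{>0}$ with $m\ge n$, let $\psi:\mathcal{G}^{(m,n)}\to\mathbb{C}$ be a Whittaker function with $\psi(I_{m+n-1})\psi(J_{m+n-1})\ne0$, and let $W'=\mathrm{Ind}_{\mathcal{G}^{(m,n)}}^{\mathcal{G}^{(m,0)}}\mathbb{C}w_\psi$. Let $w\in W'\setminus\mathbb{C}w_\psi$ and let $\deg(w)=(\mathbf{j},\mathbf{i})$. Then: (1) If $\mathbf{j}\neq\mathbf{0}$ and $r=\min\{k: j_k\neq0\}$, then $\deg\big((H_{m+n-1-r}-\psi(H_{m+n-1-r}))w\big)=(\mathbf{j}-\epsilon_r,\mathbf{i})$. (2) If $\mathbf{j}=\mathbf{0}$, $\mathbf{i}\ne\mathbf{0}$ and $s=\max\{k: i_k\ne0\}$, then $\deg\big((H_{m+n-1-s}-\psi(H_{m+n-1-s}))w\big)=(\mathbf{0},\mathbf{i}-\epsilon_s)$ or $\deg\big((L_{m+n-1-s}-\psi(L_{m+n-1-s}))w\big)=(\mathbf{0},\mathbf{i}-\epsilon_s)$.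
   Context: $\mathcal{G}$ is the complex Lie algebra with basis $\{L_n,H_n,I_n,J_n,\mathbf{c}_1,\mathbf{c}_2,\mathbf{c}_3: n\in\mathbb{Z}\}$ whose brackets of basis elements are $[L_m,L_n]=(n-m)L_{m+n}+\frac{m^3-m}{12}\delta_{m+n,0}\mathbf{c}_1$, $[L_m,H_n]=nH_{m+n}+m^2\delta_{m+n,0}\mathbf{c}_2$, $[H_m,H_n]=m\delta_{m+n,0}\mathbf{c}_3$, $[L_m,I_n]=(n-m)I_{m+n}$, $[L_m,J_n]=(n-m)J_{m+n}$, $[H_m,I_n]=I_{m+n}$, $[H_m,J_n]=-J_{m+n}$ (and antisymmetric counterparts), all other brackets of basis elements zero. For $m,n\ge0$, $\mathcal{G}^{(m,n)}=\sum_{i\ge0}(\mathbb{C}L_{m+i}+\mathbb{C}H_{m+i}+\mathbb{C}I_{n+i}+\mathbb{C}J_{n+i})+\sum_{k=1}^3\mathbb{C}\mathbf{c}_k$. A Whittaker function is a Lie homomorphism $\psi:\mathcal{G}^{(m,n)}\to\mathbb{C}$, $\mathbb{C}w_\psi$ the corresponding one-dimensional module, and $W'=\mathcal{U}(\mathcal{G}^{(m,0)})\otimes_{\mathcal{U}(\mathcal{G}^{(m,n)})}\mathbb{C}w_\psi$. Orders and degree: for $l\in\mathbb{Z}_{>0}$, elements of $\mathbb{N}^l$ are written $\mathbf{i}=(i_{l-1},\dots,i_1,i_0)$; $\epsilon_k$ has $1$ in the position of index $k$ and $0$ elsewhere; the weight is $\mathbf{w}(\mathbf{i})=\sum_{k=0}^{l-1}(l-k)i_k$.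 On $\mathbb{N}^l$, $\mathbf{i}\succ\mathbf{j}$ iff there is $k$ with $i_k>j_k$ and $i_s=j_s$ for all $s<k$. On $\mathbb{N}^l\times\mathbb{N}^l$ define the total order $(\mathbf{j},\mathbf{i})\succ(\mathbf{j}',\mathbf{i}')$ iff either $\mathbf{w}(\mathbf{j})+\mathbf{w}(\mathbf{i})>\mathbf{w}(\mathbf{j}')+\mathbf{w}(\mathbf{i}')$, or these weights are equal and $\mathbf{i}\succ\mathbf{i}'$, or the weights are equal, $\mathbf{i}=\mathbf{i}'$ and $\mathbf{j}\succ\mathbf{j}'$. Take $l=n$ and for $\mathbf{j},\mathbf{i}\in\mathbb{N}^n$ set $J^{\mathbf{j}}I^{\mathbf{i}}=J_{n-1}^{j_{n-1}}\cdots J_0^{j_0}I_{n-1}^{i_{n-1}}\cdots I_0^{i_0}$. By PBW every $w\in W'$ is uniquely $\sum_{\mathbf{j},\mathbf{i}}J^{\mathbf{j}}I^{\mathbf{i}}w_{\mathbf{j},\mathbf{i}}$ with $w_{\mathbf{j},\mathbf{i}}\in\mathbb{C}w_\psi$, finitely many nonzero; for $w\ne0$, $\deg(w)$ is the $\succ$-maximal $(\mathbf{j},\mathbf{i})$ with $w_{\mathbf{j},\mathbf{i}}\ne0$. *)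

From HB Require Import structures.
From mathcomp Require Import all_boot all_order all_algebra.
From mathcomp Require Import complex.
From mathcomp Require Import Rstruct.
Set Implicit Arguments. Unset Strict Implicit. Unset Printing Implicit Defensive.
Import Order.TTheory GRing.Theory Num.Theory.
Local Open Scope ring_scope.

Definition CC : numClosedFieldType := (Rdefinitions.R)[i].

(* Labels of the basis {L_n, H_n, I_n, J_n, c1, c2, c3 : n in Z} of G. *)
Inductive gbasis : Type :=
  | gL of int | gH of int | gI of int | gJ of int | gc1 | gc2 | gc3.

Definition delta0 (k : int) : CC := if k == 0 then 1 else 0.

(* Bracket [x, y] of two basis elements, as a finite linear combination
   (list of (coefficient, basis element)). *)
Definition gbr (x y : gbasis) : seq (CC * gbasis) :=
  match x, y with
  | gL a, gL b => [:: ((b - a)%:~R, gL (a + b));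
                      ((a ^+ 3 - a)%:~R / 12%:R * delta0 (a + b), gc1)]
  | gL a, gH b => [:: (b%:~R, gH (a + b)); ((a ^+ 2)%:~R * delta0 (a + b), gc2)]
  | gH b, gL a => [:: (- b%:~R, gH (a + b)); (- (a ^+ 2)%:~R * delta0 (a + b), gc2)]
  | gH a, gH b => [:: (a%:~R * delta0 (a + b), gc3)]
  | gL a, gI b => [:: ((b - a)%:~R, gI (a + b))]
  | gI b, gL a => [:: (- (b - a)%:~R, gI (a + b))]
  | gL a, gJ b => [:: ((b - a)%:~R, gJ (a + b))]
  | gJ b, gL a => [:: (- (b - a)%:~R, gJ (a + b))]
  | gH a, gI b => [:: (1, gI (a + b))]
  | gI b, gH a => [:: (-1, gI (a + b))]
  | gH a, gJ b => [:: (-1, gJ (a + b))]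
  | gJ b, gH a => [:: (1, gJ (a + b))]
  | _, _ => [::]
  end.

(* Membership of a basis element in G^(m,n)  (G^(m,0) for n = 0). *)
Definition inG (m n : nat) (x : gbasis) : bool :=
  match x with
  | gL k | gH k => (Posz m <= k)%R
  | gI k | gJ k => (Posz n <= k)%R
  | _ => true
  end.

Definition is_rep_m0 (m : nat) (V : lmodType CC) (rho : gbasis -> {linear V -> V}) :=
  forall x y, inG m 0 x -> inG m 0 y -> forall v : V,
    rho x (rho y v) - rho y (rho x v) = \sum_(p <- gbr x y) p.1 *: rho p.2 v.

(* A Whittaker function: a Lie homomorphism G^(m,n) -> C, given on the basis
   (its linear extension kills all brackets of basis elements). *)
Definition whittaker (m n : nat) (psi : gbasis -> CC) :=
  forall x y, inG m n x -> inG m n y -> \sum_(p <- gbr x y) p.1 * psi p.2 = 0.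

(* Multi-indices in N^n : i = (i_{n-1}, ..., i_0), component k is i k. *)
Definition midx (n : nat) := {ffun 'I_n -> nat}.

Definition mweight n (i : midx n) : nat := (\sum_(k < n) (n - k) * i k)%N.

Definition mlex_gt n (i j : midx n) : Prop :=
  exists k : 'I_n, (j k < i k)%N /\ forall s : 'I_n, (s < k)%N -> i s = j s.

Definition pair_gt n (p q : midx n * midx n) : Prop :=
  (mweight q.1 + mweight q.2 < mweight p.1 + mweight p.2)%N
  \/ (mweight p.1 + mweight p.2 = mweight q.1 + mweight q.2 /\ mlex_gt p.2 q.2)
  \/ (mweight p.1 + mweight p.2 = mweight q.1 + mweight q.2 /\ p.2 = q.2
      /\ mlex_gt p.1 q.1).

Definition meps n (r : 'I_n) : midx n := [ffun k => nat_of_bool (k == r)].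
Definition msub n (i e : midx n) : midx n := [ffun k => (i k - e k)%N].
Definition mzero n : midx n := [ffun => 0%N].

(* J^j I^i w = J_{n-1}^{j_{n-1}} ... J_0^{j_0} I_{n-1}^{i_{n-1}} ... I_0^{i_0} w *)
Definition monoI n (V : lmodType CC) (rho : gbasis -> {linear V -> V})
  (i : midx n) (w : V) : V :=
  foldl (fun acc (k : 'I_n) => iter (i k) (rho (gI (Posz k))) acc) w (enum 'I_n).
Definition monoJ n (V : lmodType CC) (rho : gbasis -> {linear V -> V})
  (j : midx n) (w : V) : V :=
  foldl (fun acc (k : 'I_n) => iter (j k) (rho (gJ (Posz k))) acc) w (enum 'I_n).
Definition mono n (V : lmodType CC) (rho : gbasis -> {linear V -> V})
  (w0 : V) (p : midx n * midx n) : V := monoJ rho p.1 (monoI rho p.2 w0).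

Definition pbw_rep n (V : lmodType CC) (rho : gbasis -> {linear V -> V}) (w0 : V)
  (v : V) (c : midx n * midx n -> CC) (s : seq (midx n * midx n)) : Prop :=
  [/\ uniq s, (forall p, c p != 0 -> p \in s) &
      v = \sum_(p <- s) c p *: mono rho w0 p].

Definition pbw_basis n (V : lmodType CC) (rho : gbasis -> {linear V -> V}) (w0 : V) :=
  (forall v : V, exists c s, @pbw_rep n V rho w0 v c s) /\
  (forall v c s c' s', @pbw_rep n V rho w0 v c s -> @pbw_rep n V rho w0 v c' s' ->
     forall p, c p = c' p).

Definition is_deg n (V : lmodType CC) (rho : gbasis -> {linear V -> V}) (w0 : V)
  (v : V) (d : midx n * midx n) : Prop :=
  exists c s, @pbw_rep n V rho w0 v c s /\ c d != 0 /\
    forall p, c p != 0 -> p <> d -> pair_gt d p.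

(* Let r be the index to be lowered (r = s in part 2), a := m + n - 1 - r and x = H_a or L_a.
   The operator x - psi(x) kills w_psi, and on vectors on which every I_l, J_l (l >= n) acts by
   psi it commutes with I_k and J_k up to the scalars psi([x, I_k]), psi([x, J_k]), multiples of
   psi(I_(a+k)), psi(J_(a+k)), which vanish for k > r.  Hence it acts on J^j I^i w_psi as a sum of
   terms each lowering one exponent at an index k <= r, and lowering at k drops the weight by
   n - k.  So every term coming from a monomial below deg w lands strictly below the target,
   except the lowering at r of the leading monomial (part 1), resp. the lowering of J_s in
   J^(eps_s) I^(i - eps_s) and of I_s in I^i (part 2).  Writing U, W for the contributions of
   these two monomials with H, the leading coefficient is W - U for H and (s - a)(U + W) for L;
   they cannot both vanish because W != 0. *)

From HB Require Import structures.
From mathcomp Require Import all_boot all_order all_algebra.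
From mathcomp Require Import complex.
From mathcomp Require Import Rstruct.
From mathcomp Require Import zify ring.
Import Order.TTheory GRing.Theory Num.Theory.
Set Implicit Arguments. Unset Strict Implicit. Unset Printing Implicit Defensive.

Section MultiIndices.
Variable n : nat.
Implicit Types (a b e f i : midx n) (d p q : midx n * midx n).

Definition pweight p := mweight p.1 + mweight p.2.
Definition pair_ge d p := p = d \/ pair_gt d p.
Definition decJ p (k : 'I_n) := (msub p.1 (meps k), p.2).
Definition decI p (k : 'I_n) := (p.1, msub p.2 (meps k)).

Lemma msub_mepsE e (k t : 'I_n) : msub e (meps k) t = e t - (t == k).
Proof. by rewrite !ffunE. Qed.

Lemma mweight_mzero : mweight (mzero n) = 0.
Proof. by rewrite /mweight big1 // => t _; rewrite ffunE muln0. Qed.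

Lemma mweight_eq0 e : mweight e = 0 -> e = mzero n.
Proof.
move=> e0; apply/ffunP => t; rewrite ffunE.
by move: e0; rewrite /mweight (bigD1 t) //=; have := ltn_ord t; nia.
Qed.

Lemma mweight_msub e f : (forall t, f t <= e t) ->
  mweight e = mweight f + mweight (msub e f).
Proof.
move=> fe; rewrite /mweight -big_split; apply: eq_bigr => t _.
by rewrite ffunE /= -mulnDr subnKC ?fe.
Qed.

Lemma mweight_meps (k : 'I_n) : mweight (meps k) = n - k.
Proof.
rewrite /mweight (bigD1 k) //= big1 => [|t tk]; first by rewrite ffunE eqxx muln1 addn0.
by rewrite ffunE (negbTE tk) muln0.
Qed.

Lemma meps_le e (k : 'I_n) : e k != 0 -> forall t, meps k t <= e t.
Proof. by move=> ek t; rewrite ffunE; case: eqP => [->|]; rewrite ?lt0n. Qed.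

Lemma msub_eq0 e f : (forall t, f t <= e t) -> msub e f = mzero n -> e = f.
Proof.
move=> fe /ffunP ef; apply/ffunP => t; apply/eqP; rewrite eqn_leq fe -subn_eq0.
by have := ef t; rewrite !ffunE => ->.
Qed.

Lemma mweight_msub_meps e (k : 'I_n) : e k != 0 ->
  mweight e = mweight (msub e (meps k)) + (n - k).
Proof. by move/meps_le/mweight_msub ->; rewrite mweight_meps addnC. Qed.

Lemma mlex_gt_irr a : ~ mlex_gt a a.
Proof. by case=> k []; rewrite ltnn. Qed.

Lemma mlex_gt_trans a b e : mlex_gt a b -> mlex_gt b e -> mlex_gt a e.
Proof.
case=> k1 [lt1 eq1] [k2 [lt2 eq2]]; case: (ltngtP k1 k2) => [k12|k21|/val_inj k12].
- exists k1; split=> [|t tk]; first by rewrite -eq2.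
  by rewrite eq1 // eq2 //; apply: ltn_trans k12.
- exists k2; split=> [|t tk]; first by rewrite eq1.
  by rewrite eq1 ?eq2 //; apply: ltn_trans k21.
- subst k2; exists k1; split=> [|t tk]; first exact: ltn_trans lt1.
  by rewrite eq1 ?eq2.
Qed.

Lemma mlex_gt_msub_meps e (k : 'I_n) : e k != 0 -> mlex_gt e (msub e (meps k)).
Proof.
move=> ek; exists k; rewrite msub_mepsE eqxx; split=> [|t tk]; first by lia.
rewrite msub_mepsE (_ : t == k = false) ?subn0 //.
by apply: contraTF tk => /eqP ->; rewrite ltnn.
Qed.

Lemma mlex_gt_msub2 a b (k : 'I_n) : mlex_gt a b -> a k != 0 -> b k != 0 ->
  mlex_gt (msub a (meps k)) (msub b (meps k)).
Proof.
case=> t [ba eqab] ak bk; exists t; rewrite !msub_mepsE; split=> [|u ut].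
  by case: eqP => [tk|]; rewrite ?subn0 //; move: ak bk ba; rewrite tk; lia.
by rewrite !msub_mepsE eqab.
Qed.

Lemma pair_gt_irr d : ~ pair_gt d d.
Proof. by case=> [|[[_ /mlex_gt_irr]|[_ [_ /mlex_gt_irr]]]] //; rewrite ltnn. Qed.

Lemma pweight_ge d p : pair_ge d p -> pweight p <= pweight d.
Proof. by case=> [->//|]; rewrite /pweight; case=> [|[[]|[]]] /=; lia. Qed.

Lemma pair_ge_eqweight d p : pair_ge d p -> pweight p = pweight d ->
  p = d \/ mlex_gt d.2 p.2 \/ (d.2 = p.2 /\ mlex_gt d.1 p.1).
Proof.
case=> [|[|[[_ gt2]|[_ [e2 gt1]]]]]; [by left|rewrite /pweight; lia|by right; left|].
by right; right.
Qed.

Lemma pair_gt_eqweight d q : pweight q = pweight d ->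
  mlex_gt d.2 q.2 \/ (d.2 = q.2 /\ mlex_gt d.1 q.1) -> pair_gt d q.
Proof. by move=> w [gt|[e gt]]; right; [left|right]. Qed.

Lemma mlex_gt_mzero a : ~ mlex_gt (mzero n) a.
Proof. by case=> k []; rewrite ffunE. Qed.

Lemma pweight_decJ p k : p.1 k != 0 -> pweight p = pweight (decJ p k) + (n - k).
Proof. by move/mweight_msub_meps; rewrite /pweight /= => ->; rewrite addnAC. Qed.

Lemma pweight_decI p k : p.2 k != 0 -> pweight p = pweight (decI p k) + (n - k).
Proof. by move/mweight_msub_meps; rewrite /pweight /= => ->; rewrite addnA. Qed.

Lemma pair_gt_dec_or_top d p d' q (k r : 'I_n) : pair_ge d p -> k <= r ->
  pweight p = pweight q + (n - k) -> pweight d = pweight d' + (n - r) ->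
  pair_gt d' q \/ (k = r /\ pweight p = pweight d).
Proof.
move=> /pweight_ge pd kr wp wd.
case: (ltnP (pweight q) (pweight d')) => [lt|ge]; first by left; left.
have kn := ltn_ord k; have rn := ltn_ord r.
by right; split; [apply: ord_inj|]; lia.
Qed.

Lemma decJ_lt_decJ d p (k r : 'I_n) : d.1 r != 0 -> pair_ge d p -> p.1 k != 0 ->
  k <= r -> pair_gt (decJ d r) (decJ p k) \/ (p = d /\ k = r).
Proof.
move=> dr dp pk kr.
have [|[kr' wpd]] := pair_gt_dec_or_top dp kr (pweight_decJ pk) (pweight_decJ dr).
  by left.
subst k; have [->|gt] := pair_ge_eqweight dp wpd; first by right.
left; apply: pair_gt_eqweight; first by move: (pweight_decJ pk) (pweight_decJ dr); lia.
by case: gt => [gt|[e gt]]; [left|right; split=> //; exact: mlex_gt_msub2].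
Qed.

Lemma decI_lt_decJ d p (k r : 'I_n) : d.1 r != 0 -> pair_ge d p -> p.2 k != 0 ->
  k <= r -> pair_gt (decJ d r) (decI p k).
Proof.
move=> dr dp pk kr.
have [//|[kr' wpd]] := pair_gt_dec_or_top dp kr (pweight_decI pk) (pweight_decJ dr).
subst k; apply: pair_gt_eqweight; first by move: (pweight_decI pk) (pweight_decJ dr); lia.
left; have lt := mlex_gt_msub_meps pk.
case: (pair_ge_eqweight dp wpd) => [<-|[gt|[e _]]] //=; last by rewrite e.
exact: mlex_gt_trans gt lt.
Qed.

Lemma mlex_gt_msub_meps_top i a b (s : 'I_n) : mlex_gt i b ->
  (forall t : 'I_n, s < t -> i t = 0) -> i s != 0 -> a s != 0 ->
  mweight a + mweight b = mweight i ->
  mlex_gt (msub i (meps s)) b \/ (a = meps s /\ b = msub i (meps s)).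
Proof.
case=> k [lt eq] itop is0 as0 w; have ks : k <= s.
  by rewrite leqNgt; apply/negP => /itop ik; rewrite ik in lt.
have below (t : 'I_n) : t < s -> msub i (meps s) t = i t.
  move=> ts; rewrite msub_mepsE (_ : t == s = false) ?subn0 //.
  by apply: contraTF ts => /eqP ->; rewrite ltnn.
case: (ltnP k s) => [lt_ks|sk].
  left; exists k; rewrite below //; split=> // t tk.
  by rewrite below ?eq //; apply: ltn_trans lt_ks.
have ek : k = s by apply: ord_inj; lia.
subst k.
case: (ltnP (b s) (i s - 1)) => bs.
  by left; exists s; rewrite msub_mepsE eqxx; split=> // t ts; rewrite below ?eq.
have ib (t : 'I_n) : msub i (meps s) t <= b t.
  case: (ltngtP t s) => [ts|st|/ord_inj ->]; first by rewrite below ?eq.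
    by rewrite msub_mepsE itop.
  by rewrite msub_mepsE eqxx.
move: w; rewrite (mweight_msub ib) (mweight_msub_meps as0) (mweight_msub_meps is0) => w.
by right; split; apply: msub_eq0 => //; [exact: meps_le| |]; apply: mweight_eq0; lia.
Qed.

Lemma decJ_lt_decI_top i p (k s : 'I_n) : i s != 0 ->
  (forall t : 'I_n, s < t -> i t = 0) -> pair_ge (mzero n, i) p -> p.1 k != 0 ->
  k <= s -> pair_gt (decI (mzero n, i) s) (decJ p k) \/
            (p = (meps s, msub i (meps s)) /\ k = s).
Proof.
move=> is0 itop dp pk ks; have wd := @pweight_decI (mzero n, i) s is0.
have [|[ks' wpd]] := pair_gt_dec_or_top dp ks (pweight_decJ pk) wd; first by left.
subst k; case: (pair_ge_eqweight dp wpd) => [pd|[/= gt|[_ /mlex_gt_mzero]]] //.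
  by move: pk; rewrite pd ffunE.
have wi : mweight p.1 + mweight p.2 = mweight i by move: wpd; rewrite /pweight mweight_mzero.
case: (mlex_gt_msub_meps_top gt itop is0 pk wi) => [lt|[e1 e2]].
  left; apply: pair_gt_eqweight; last by left.
  by move: (pweight_decJ pk) wd; lia.
by right; split=> //; case: p {dp pk wpd gt wi} e1 e2 => /= ? ? -> ->.
Qed.

Lemma decI_lt_decI_top i p (k s : 'I_n) : i s != 0 -> pair_ge (mzero n, i) p ->
  p.2 k != 0 -> k <= s ->
  pair_gt (decI (mzero n, i) s) (decI p k) \/ (p = (mzero n, i) /\ k = s).
Proof.
move=> is0 dp pk ks; have wd := @pweight_decI (mzero n, i) s is0.
have [|[ks' wpd]] := pair_gt_dec_or_top dp ks (pweight_decI pk) wd; first by left.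
subst k; case: (pair_ge_eqweight dp wpd) => [->|[/= gt|[_ /mlex_gt_mzero]]] //; first by right.
left; apply: pair_gt_eqweight; first by move: (pweight_decI pk) wd; lia.
by left; apply: mlex_gt_msub2.
Qed.

End MultiIndices.

Local Open Scope ring_scope.

Section OrderedMonomials.
Variables (R : pzRingType) (V : lmodType R) (n : nat) (X : 'I_n -> {linear V -> V}).

Definition ordmono (e : midx n) (ks : seq 'I_n) (v : V) : V :=
  foldl (fun acc k => iter (e k) (X k) acc) v ks.

Lemma ordmono_is_linear e ks : linear (ordmono e ks).
Proof.
move=> a u v; elim: ks u v => [|k ks IH] u v //=.
rewrite /ordmono /= -IH; congr foldl.
by elim: (e k) => //= t ->; rewrite linearP.
Qed.

HB.instance Definition _ e ks :=
  GRing.isLinear.Build R V V *:%R (ordmono e ks) (@ordmono_is_linear e ks).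

Lemma ordmono_stable (P : V -> Prop) : (forall k v, P v -> P (X k v)) ->
  forall e ks v, P v -> P (ordmono e ks v).
Proof.
move=> XP e; elim=> [|k ks IH] v Pv //=; apply: IH.
by elim: (e k) => //= t Pt; apply: XP.
Qed.

Lemma ordmono_msub_other e ks (k : 'I_n) v : k \notin ks ->
  ordmono (msub e (meps k)) ks v = ordmono e ks v.
Proof.
elim: ks v => [|k' ks IH] v //=; rewrite inE negb_or => /andP[kk' kks].
by rewrite /ordmono /= !ffunE eq_sym (negbTE kk') subn0 -!/(ordmono _ _ _) IH.
Qed.

Variables (T : V -> V) (P : V -> Prop) (c : 'I_n -> R).
Hypothesis XP : forall k v, P v -> P (X k v).
Hypothesis TX : forall k v, P v -> T (X k v) = X k (T v) + c k *: v.

Lemma iter_commute (k : 'I_n) e v : P v ->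
  T (iter e (X k) v) = iter e (X k) (T v) + (e%:R * c k) *: iter e.-1 (X k) v.
Proof.
elim: e => [|e IH] Pv /=; first by rewrite mul0r scale0r addr0.
have Pe : P (iter e (X k) v) by elim: e {IH} => //= e IH; apply: XP.
rewrite TX // IH // linearD linearZ /= -addrA mulrSr mulrDl mul1r scalerDl.
by case: e {IH Pe} => [|e] //=; rewrite !mul0r !scale0r.
Qed.

Lemma ordmono_commute e ks v : uniq ks -> P v ->
  T (ordmono e ks v) = ordmono e ks (T v) +
     \sum_(k <- ks) ((e k)%:R * c k) *: ordmono (msub e (meps k)) ks v.
Proof.
elim: ks v => [|k ks IH] v /=; first by rewrite big_nil addr0.
case/andP=> kks uks Pv.
have Pk : P (iter (e k) (X k) v) by elim: (e k) => //= t Pt; apply: XP.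
rewrite /ordmono /= -!/(ordmono _ _ _) IH // iter_commute // linearD linearZ big_cons.
rewrite -addrA; congr (_ + (_ + _)).
  rewrite -/(ordmono _ ks _) ordmono_msub_other // !ffunE eqxx subn1.
  by case: (e k).
apply: eq_big_seq => k' k'ks; rewrite -/(ordmono _ ks _) !ffunE.
by rewrite (_ : (k == k') = false) ?subn0 //; apply: contraNF kks => /eqP ->.
Qed.

End OrderedMonomials.

Lemma big_uniq_supp (I : eqType) (M : nmodType) (r s : seq I) (F : I -> M) :
  uniq r -> uniq s -> (forall i, F i != 0 -> (i \in r) && (i \in s)) ->
  \sum_(i <- r) F i = \sum_(i <- s) F i.
Proof.
move=> ur us supp; apply: perm_big_supp; apply: uniq_perm; rewrite ?filter_uniq //.
by move=> i; rewrite !mem_filter; case: (eqVneq (F i) 0) => //= /supp /andP[-> ->].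
Qed.

Lemma big_allpairs_supp (I J : eqType) (M : nmodType) (r : seq I) (t : seq J)
    (S : seq (I * J)) (F : I * J -> M) :
  uniq r -> uniq t -> uniq S ->
  (forall z, z \in S -> F z != 0 -> (z.1 \in r) && (z.2 \in t)) ->
  \sum_(i <- r) \sum_(j <- t | (i, j) \in S) F (i, j) = \sum_(z <- S) F z.
Proof.
move=> ur ut uS supp.
transitivity (\sum_(z <- [seq (i, j) | i <- r, j <- t]) if z \in S then F z else 0).
  by rewrite big_allpairs; apply: eq_bigr => i _; exact: big_mkcond.
rewrite [RHS]big_seq [RHS]big_mkcond; apply: big_uniq_supp => //.
  by apply: allpairs_uniq => // -[? ?] [? ?] _ _ [-> ->].
move=> [i j]; case: ifP => [ijS Fij|]; last by rewrite eqxx.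
by have /andP[ir jt] := supp _ ijS Fij; rewrite andbT allpairs_f.
Qed.

Section Expansions.
Variables (n : nat) (V : lmodType CC) (rho : gbasis -> {linear V -> V}) (w0 : V).
Local Notation mono := (mono rho w0).
Local Notation pbw_rep := (@pbw_rep n V rho w0).

Lemma pbw_rep0 : pbw_rep 0 (fun=> 0) [::].
Proof. by split=> [|p|]; rewrite ?big_nil ?eqxx. Qed.

Lemma pbw_rep_mono q : pbw_rep (mono q) (fun p => (p == q)%:R) [:: q].
Proof.
split=> // [p|]; first by rewrite pnatr_eq0 mem_seq1; case: (p == q).
by rewrite big_cons big_nil eqxx scale1r addr0.
Qed.

Lemma pbw_repZ a v c s : pbw_rep v c s -> pbw_rep (a *: v) (fun p => a * c p) s.
Proof.
case=> us supp ->; split=> // [p|]; first by rewrite mulf_eq0 negb_or => /andP[_ /supp].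
by rewrite scaler_sumr; apply: eq_bigr => p _; rewrite scalerA.
Qed.

Lemma pbw_repD u v c c' s s' : pbw_rep u c s -> pbw_rep v c' s' ->
  pbw_rep (u + v) (fun p => c p + c' p) (undup (s ++ s')).
Proof.
case=> us supp ->; case=> us' supp' ->; split; first exact: undup_uniq.
  move=> p; rewrite mem_undup mem_cat.
  by case: (eqVneq (c p) 0) => [->|/supp -> //]; rewrite add0r => /supp' ->; rewrite orbT.
have supp_in (t : seq (midx n * midx n)) (d : midx n * midx n -> CC) :
    (forall p, d p != 0 -> p \in t) -> forall p, d p *: mono p != 0 -> p \in t.
  by move=> h p; case: (eqVneq (d p) 0) => [->|/h //]; rewrite scale0r eqxx.
under [RHS]eq_bigr do rewrite scalerDl.
rewrite big_split /=; congr (_ + _); apply: big_uniq_supp; rewrite ?undup_uniq //.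
  by move=> p /(supp_in _ _ supp) ps; rewrite mem_undup mem_cat ps.
by move=> p /(supp_in _ _ supp') ps; rewrite mem_undup mem_cat ps orbT.
Qed.

Definition lower d (v : V) :=
  exists c s, pbw_rep v c s /\ forall p, c p != 0 -> pair_gt d p.

Definition lead d (a : CC) (v : V) := lower d (v - a *: mono d).

Lemma lower0 d : lower d 0.
Proof. by exists (fun=> 0), [::]; split; [exact: pbw_rep0 | move=> p; rewrite eqxx]. Qed.

Lemma lowerZ d a v : lower d v -> lower d (a *: v).
Proof.
case=> c [s [rep low]]; exists (fun p => a * c p), s; split; first exact: pbw_repZ.
by move=> p; rewrite mulf_eq0 negb_or => /andP[_ /low].
Qed.

Lemma lowerD d u v : lower d u -> lower d v -> lower d (u + v).
Proof.
case=> c [s [rep low]] [c' [s' [rep' low']]].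
exists (fun p => c p + c' p), (undup (s ++ s')); split; first exact: pbw_repD.
by move=> p; case: (eqVneq (c p) 0) => [->|/low //]; rewrite add0r => /low'.
Qed.

Lemma lower_mono d q : pair_gt d q -> lower d (mono q).
Proof.
move=> dq; exists (fun p => (p == q)%:R), [:: q]; split; first exact: pbw_rep_mono.
by move=> p; case: (eqVneq p q) => [-> //|_]; rewrite mulr0n eqxx.
Qed.

Lemma lead0 d : lead d 0 0.
Proof. by rewrite /lead scale0r subr0; exact: lower0. Qed.

Lemma leadD d a b u v : lead d a u -> lead d b v -> lead d (a + b) (u + v).
Proof. by rewrite /lead scalerDl opprD addrACA; exact: lowerD. Qed.

Lemma leadZ d k a v : lead d a v -> lead d (k * a) (k *: v).
Proof. by rewrite /lead -scalerA -scalerBr; exact: lowerZ. Qed.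

Lemma lead_sum (I : Type) (r : seq I) d (a : I -> CC) (F : I -> V) :
  (forall i, lead d (a i) (F i)) -> lead d (\sum_(i <- r) a i) (\sum_(i <- r) F i).
Proof.
move=> h; elim: r => [|i r IH]; rewrite ?big_nil ?big_cons; first exact: lead0.
exact: leadD.
Qed.

Lemma lead_term d q a (b : bool) : (b -> q = d) -> (a != 0 -> ~~ b -> pair_gt d q) ->
  lead d (if b then a else 0) (a *: mono q).
Proof.
rewrite /lead; case: b => [/(_ isT) -> _|_ low]; first by rewrite subrr; exact: lower0.
rewrite scale0r subr0; case: (eqVneq a 0) => [->|/low low'].
  by rewrite scale0r; exact: lower0.
exact/lowerZ/lower_mono/low'.
Qed.

Lemma is_deg_lead d a v : a != 0 -> lead d a v -> is_deg rho w0 v d.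
Proof.
move=> a0 [c [s [rep low]]].
have c_d : c d = 0 by apply/eqP; apply: contraT => /low /pair_gt_irr.
have := pbw_repD (pbw_repZ a (pbw_rep_mono d)) rep; rewrite addrC subrK => rep'.
do 2 eexists; split; first exact: rep'.
rewrite /= eqxx mulr1 c_d addr0; split=> // p.
by case: (eqVneq p d) => // _; rewrite mulr0 add0r => /low.
Qed.

Lemma is_degP v d : is_deg rho w0 v d ->
  exists c s, [/\ pbw_rep v c s, c d != 0 & forall p, c p != 0 -> pair_ge d p].
Proof.
case=> c [s [rep [cd low]]]; exists c, s; split=> // p cp.
case: (eqVneq p d) => [->|pd]; [by left|right; apply: low => // dp].
by rewrite dp eqxx in pd.
Qed.

End Expansions.

Lemma inG_m0 m n x : inG m n x -> inG m 0 x.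
Proof. by case: x => //= k; lia. Qed.

Section Whittaker.
Variables (m n : nat) (psi : gbasis -> CC) (V : lmodType CC).
Variables (rho : gbasis -> {linear V -> V}) (w0 : V).
Hypothesis hpsi : whittaker m n psi.
Hypothesis hrho : is_rep_m0 m rho.
Hypothesis hw0 : forall x, inG m n x -> rho x w0 = psi x *: w0.

Local Notation mono := (mono rho w0).

Lemma rho_commute x y v : inG m 0 x -> inG m 0 y -> gbr x y = [::] ->
  rho x (rho y v) = rho y (rho x v).
Proof. by move=> hx hy gxy; apply/eqP; rewrite -subr_eq0 hrho // gxy big_nil. Qed.

Lemma psi_J_high (l : int) : Posz (m + n) <= l -> psi (gJ l) = 0.
Proof.
move=> hl; have := hpsi (x := gJ (l - Posz m)) (y := gH (Posz m)).
by rewrite /= big_cons big_nil addr0 /= mul1r subrKC; apply=> //; lia.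
Qed.

Lemma psi_I_high (l : int) : Posz (m + n) <= l -> psi (gI l) = 0.
Proof.
move=> hl; have := hpsi (x := gH (Posz m)) (y := gI (l - Posz m)).
by rewrite /= big_cons big_nil addr0 /= mul1r subrKC; apply=> //; lia.
Qed.

Definition IJ_eigen (v : V) := forall l : int, Posz n <= l ->
  rho (gI l) v = psi (gI l) *: v /\ rho (gJ l) v = psi (gJ l) *: v.

Lemma IJ_eigen_w0 : IJ_eigen w0.
Proof. by move=> l hl; rewrite !hw0. Qed.

Lemma IJ_eigen_rho y v : inG m 0 y ->
  (forall l, gbr (gI l) y = [::] /\ gbr (gJ l) y = [::]) ->
  IJ_eigen v -> IJ_eigen (rho y v).
Proof.
move=> hy comm ev l hl; have [lI lJ] : inG m 0 (gI l) /\ inG m 0 (gJ l) by rewrite /=; lia.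
have [eI eJ] := ev l hl; have [cI cJ] := comm l.
by rewrite (rho_commute _ lI hy cI) (rho_commute _ lJ hy cJ) eI eJ !linearZ.
Qed.

Definition shift x v := rho x v - psi x *: v.

Lemma shift_is_linear x : linear (shift x).
Proof.
by move=> b u v; rewrite /shift linearP scalerDr scalerBr !scalerA mulrC opprD addrACA.
Qed.

HB.instance Definition _ x :=
  GRing.isLinear.Build CC V V *:%R (shift x) (@shift_is_linear x).

Lemma shift_w0 x : inG m n x -> shift x w0 = 0.
Proof. by move=> hx; rewrite /shift hw0 // subrr. Qed.

Lemma shift_rho x y b z v : inG m 0 x -> inG m 0 y -> gbr x y = [:: (b, z)] ->
  rho z v = psi z *: v -> shift x (rho y v) = rho y (shift x v) + (b * psi z) *: v.
Proof.
move=> hx hy gxy hz; rewrite /shift linearB linearZ /=; have /eqP := hrho hx hy v.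
rewrite gxy big_cons big_nil addr0 /= hz scalerA subr_eq => /eqP ->.
by rewrite linearZ /= scalerN [RHS]addrC addrA.
Qed.

Section ShiftMonomial.
Variables (x : gbasis) (a : int) (bJ bI : 'I_n -> CC).
Hypothesis hx : inG m n x.
Hypothesis ha : Posz n <= a.
Hypothesis hxJ : forall k : 'I_n, gbr x (gJ k) = [:: (bJ k, gJ (a + k))].
Hypothesis hxI : forall k : 'I_n, gbr x (gI k) = [:: (bI k, gI (a + k))].

Local Notation cJ k := (bJ k * psi (gJ (a + Posz k))).
Local Notation cI k := (bI k * psi (gI (a + Posz k))).

Lemma shift_mono p : shift x (mono p) =
  \sum_(k <- enum 'I_n) ((p.1 k)%:R * cJ k) *: mono (decJ p k) +
  \sum_(k <- enum 'I_n) ((p.2 k)%:R * cI k) *: mono (decI p k).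
Proof.
pose XJ (k : 'I_n) := rho (gJ k).
pose XI (k : 'I_n) := rho (gI k).
have eigenJ k v : IJ_eigen v -> IJ_eigen (XJ k v) by apply: IJ_eigen_rho.
have eigenI k v : IJ_eigen v -> IJ_eigen (XI k v) by apply: IJ_eigen_rho.
have commJ k v : IJ_eigen v -> shift x (XJ k v) = XJ k (shift x v) + cJ k *: v.
  by move=> ev; apply: shift_rho (inG_m0 hx) _ (hxJ k) _ => //; apply: (ev _ _).2; lia.
have commI k v : IJ_eigen v -> shift x (XI k v) = XI k (shift x v) + cI k *: v.
  by move=> ev; apply: shift_rho (inG_m0 hx) _ (hxI k) _ => //; apply: (ev _ _).1; lia.
have mono_ord q :
  mono q = ordmono XJ q.1 (enum 'I_n) (ordmono XI q.2 (enum 'I_n) w0) by [].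
rewrite mono_ord (ordmono_commute eigenJ commJ) ?enum_uniq //; last first.
  exact: ordmono_stable eigenI _ _ _ IJ_eigen_w0.
have := ordmono_commute eigenI commI p.2 (enum_uniq 'I_n) IJ_eigen_w0.
rewrite (shift_w0 hx) linear0 add0r => ->.
by rewrite linear_sum addrC; congr (_ + _); apply: eq_bigr => k _; rewrite linearZ.
Qed.

Lemma lead_shift (SJ SI : seq (midx n * midx n * 'I_n)) d w c s :
  uniq SJ -> uniq SI ->
  (forall z, z \in SJ -> decJ z.1 z.2 = d) ->
  (forall z, z \in SI -> decI z.1 z.2 = d) ->
  pbw_rep rho w0 w c s ->
  (forall p k, c p != 0 -> (p.1 k)%:R * cJ k != 0 -> (p, k) \notin SJ ->
     pair_gt d (decJ p k)) ->
  (forall p k, c p != 0 -> (p.2 k)%:R * cI k != 0 -> (p, k) \notin SI ->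
     pair_gt d (decI p k)) ->
  lead rho w0 d (\sum_(z <- SJ) c z.1 * ((z.1.1 z.2)%:R * cJ z.2) +
                 \sum_(z <- SI) c z.1 * ((z.1.2 z.2)%:R * cI z.2)) (shift x w).
Proof.
move=> uJ uI srcJ srcI [us supp ->] lowJ lowI.
have regroup (S : seq (midx n * midx n * 'I_n)) (A : midx n * midx n -> 'I_n -> CC) :
    uniq S -> \sum_(z <- S) c z.1 * A z.1 z.2 =
              \sum_(p <- s) c p * \sum_(k <- enum 'I_n | (p, k) \in S) A p k.
  move=> uS; under [RHS]eq_bigr do rewrite mulr_sumr.
  rewrite (big_allpairs_supp (F := fun z => c z.1 * A z.1 z.2)) ?enum_uniq // => -[p k] _.
  by rewrite mem_enum andbT; case: (eqVneq (c p) 0) => [->|/supp //]; rewrite mul0r eqxx.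
rewrite (regroup SJ (fun p k => (p.1 k)%:R * cJ k)) //.
rewrite (regroup SI (fun p k => (p.2 k)%:R * cI k)) // -big_split linear_sum.
apply: lead_sum => p /=.
rewrite -mulrDr; case: (eqVneq (c p) 0) => [->|cp].
  by rewrite scale0r linear0 mul0r; exact: lead0.
rewrite linearZ /=; apply: leadZ; rewrite shift_mono.
apply: leadD; rewrite big_mkcond; apply: lead_sum => k; apply: lead_term.
- exact: (srcJ (p, k)).
- exact: lowJ.
- exact: (srcI (p, k)).
- exact: lowI.
Qed.

Section TopShift.
Variable r : 'I_n.
Hypothesis har : a = Posz (m + n - 1 - r).

Lemma shift_coefJ_neq0 (e : midx n) k :
  (e k)%:R * cJ k != 0 -> e k != 0 /\ (k <= r)%N.
Proof.
rewrite !mulf_eq0 !negb_or pnatr_eq0 => /and3P[ek _ psik]; split=> //.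
by apply/negPn/negP => kr; move: psik; rewrite psi_J_high ?eqxx // har; lia.
Qed.

Lemma shift_coefI_neq0 (e : midx n) k :
  (e k)%:R * cI k != 0 -> e k != 0 /\ (k <= r)%N.
Proof.
rewrite !mulf_eq0 !negb_or pnatr_eq0 => /and3P[ek _ psik]; split=> //.
by apply/negPn/negP => kr; move: psik; rewrite psi_I_high ?eqxx // har; lia.
Qed.

Lemma top_index : a + Posz r = Posz (m + n - 1).
Proof. by rewrite har; have := ltn_ord r; lia. Qed.

Lemma is_deg_shift_decJ (d : midx n * midx n) w :
  bJ r != 0 -> psi (gJ (Posz (m + n - 1))) != 0 -> (d.1 r != 0)%N ->
  is_deg rho w0 w d -> is_deg rho w0 (shift x w) (decJ d r).
Proof.
move=> bJr psiJ dr /is_degP[c [s [rep cd ge_d]]].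
apply: (is_deg_lead _ (lead_shift (SJ := [:: (d, r)]) (SI := [::]) _ _ _ _ rep _ _)) => //.
- by rewrite big_seq1 big_nil addr0 top_index !mulf_neq0 // pnatr_eq0.
- by move=> z; rewrite mem_seq1 => /eqP ->.
- move=> p k cp /shift_coefJ_neq0[pk kr]; rewrite mem_seq1.
  by case: (decJ_lt_decJ dr (ge_d p cp) pk kr) => // -[-> ->] /eqP.
- move=> p k cp /shift_coefI_neq0[pk kr] _.
  exact: decI_lt_decJ dr (ge_d p cp) pk kr.
Qed.

Lemma is_deg_shift_top (i : midx n) w c s : pbw_rep rho w0 w c s ->
  (forall p, c p != 0 -> pair_ge (mzero n, i) p) ->
  (i r != 0)%N -> (forall t : 'I_n, (r < t)%N -> i t = 0%N) ->
  c (meps r, msub i (meps r)) * (bJ r * psi (gJ (Posz (m + n - 1)))) +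
  c (mzero n, i) * ((i r)%:R * (bI r * psi (gI (Posz (m + n - 1))))) != 0 ->
  is_deg rho w0 (shift x w) (mzero n, msub i (meps r)).
Proof.
move=> rep ge_d ir itop kappa.
have top_src : decJ (meps r, msub i (meps r)) r = (mzero n, msub i (meps r)).
  by congr pair; apply/ffunP => t; rewrite !ffunE subnn.
apply: (is_deg_lead _ (lead_shift (SJ := [:: (meps r, msub i (meps r), r)])
                                  (SI := [:: (mzero n, i, r)]) _ _ _ _ rep _ _)) => //.
- by rewrite !big_seq1 /= top_index ffunE eqxx mul1r.
- by move=> z; rewrite mem_seq1 => /eqP ->.
- by move=> z; rewrite mem_seq1 => /eqP ->.
- move=> p k cp /shift_coefJ_neq0[pk kr]; rewrite mem_seq1.
  by case: (decJ_lt_decI_top ir itop (ge_d p cp) pk kr) => // -[-> ->] /eqP.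
- move=> p k cp /shift_coefI_neq0[pk kr]; rewrite mem_seq1.
  by case: (decI_lt_decI_top ir (ge_d p cp) pk kr) => // -[-> ->] /eqP.
Qed.

End TopShift.

End ShiftMonomial.

Lemma is_deg_shiftH_decJ (d : midx n * midx n) (r : 'I_n) w :
  (n <= m)%N -> psi (gJ (Posz (m + n - 1))) != 0 ->
  (d.1 r != 0)%N -> is_deg rho w0 w d ->
  is_deg rho w0 (shift (gH (Posz (m + n - 1 - r))) w) (decJ d r).
Proof.
move=> hmn psiJ_top dr hd; set a := Posz (m + n - 1 - r).
have [hxm hxn] : Posz m <= a /\ Posz n <= a by have := ltn_ord r; lia.
apply: (@is_deg_shift_decJ (gH a) a (fun=> -1) (fun=> 1) hxm hxn (fun k => erefl)
  (fun k => erefl) r erefl) => //.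
by rewrite oppr_eq0 oner_eq0.
Qed.

Lemma is_deg_shiftHL_top (i : midx n) (s : 'I_n) w :
  (n <= m)%N -> psi (gJ (Posz (m + n - 1))) != 0 -> psi (gI (Posz (m + n - 1))) != 0 ->
  is_deg rho w0 w (mzero n, i) ->
  (i s != 0)%N -> (forall t : 'I_n, (s < t)%N -> i t = 0%N) ->
  let a := Posz (m + n - 1 - s) in
  is_deg rho w0 (shift (gH a) w) (mzero n, msub i (meps s)) \/
  is_deg rho w0 (shift (gL a) w) (mzero n, msub i (meps s)).
Proof.
move=> hmn psiJ_top psiI_top /is_degP[c [s0 [rep cd ge_d]]] is0 itop a.
have [hxm hxn] : Posz m <= a /\ Posz n <= a by have := ltn_ord s; lia.
set U := c (meps s, msub i (meps s)) * psi (gJ (Posz (m + n - 1))).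
set W := c (mzero n, i) * ((i s)%:R * psi (gI (Posz (m + n - 1)))).
have W0 : W != 0 by rewrite !mulf_neq0 ?pnatr_eq0.
have z0 : (Posz s - a)%:~R != 0 :> CC.
  by rewrite intr_eq0 subr_eq0; apply/eqP; have := ltn_ord s; lia.
case: (eqVneq W U) => [WU|WU]; [right|left].
  apply: (@is_deg_shift_top (gL a) a (fun k => (Posz k - a)%:~R) (fun k => (Posz k - a)%:~R)
    hxm hxn (fun k => erefl) (fun k => erefl) s erefl _ _ _ _ rep ge_d is0 itop).
  rewrite (_ : _ + _ = (Posz s - a)%:~R * (U + W)); last by rewrite /U /W; ring.
  by rewrite -WU mulf_neq0 // -mulr2n mulrn_eq0 negb_or W0.
apply: (@is_deg_shift_top (gH a) a (fun=> -1) (fun=> 1) hxm hxn (fun k => erefl)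
  (fun k => erefl) s erefl _ _ _ _ rep ge_d is0 itop).
by rewrite (_ : _ + _ = W - U) ?subr_eq0 // /U /W; ring.
Qed.

End Whittaker.

Theorem lemma3p2 (m n : nat) (hn : (0 < n)%N) (hmn : (n <= m)%N)
  (psi : gbasis -> CC) (hpsi : whittaker m n psi)
  (hIJ : psi (gI (Posz (m + n - 1))) * psi (gJ (Posz (m + n - 1))) != 0)
  (V : lmodType CC) (rho : gbasis -> {linear V -> V}) (hrho : is_rep_m0 m rho)
  (w0 : V) (hw0 : forall x, inG m n x -> rho x w0 = psi x *: w0)
  (hpbw : pbw_basis n rho w0)
  (w : V) (hw : ~ exists a : CC, w = a *: w0)
  (j i : midx n) (hdeg : is_deg rho w0 w (j, i)) :
  (forall r : 'I_n, j r != 0%N -> (forall k : 'I_n, (k < r)%N -> j k = 0%N) ->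
     let x := gH (Posz (m + n - 1 - r)) in
     is_deg rho w0 (rho x w - psi x *: w) (msub j (meps r), i))
  /\
  (j = mzero n -> forall s : 'I_n, i s != 0%N ->
     (forall k : 'I_n, (s < k)%N -> i k = 0%N) ->
     let xH := gH (Posz (m + n - 1 - s)) in
     let xL := gL (Posz (m + n - 1 - s)) in
     is_deg rho w0 (rho xH w - psi xH *: w) (mzero n, msub i (meps s))
     \/ is_deg rho w0 (rho xL w - psi xL *: w) (mzero n, msub i (meps s))).
Proof.
have [psiI psiJ] : psi (gI (Posz (m + n - 1))) != 0 /\ psi (gJ (Posz (m + n - 1))) != 0.
  by apply/andP; rewrite -negb_or -mulf_eq0.
split=> [r jr _|j0 s is0 itop].
  exact: (is_deg_shiftH_decJ hpsi hrho hw0 (d := (j, i)) hmn psiJ jr hdeg).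
by move: hdeg; rewrite j0 => /(is_deg_shiftHL_top hpsi hrho hw0 hmn psiJ psiI); apply.
Qed.
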